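(* Let $X,Y$ be nonempty compact Hausdorff spaces, $E\neq\{0_E\}$ a complex locally convex space, and $T:C(X,E)\to C(Y,E)$ a map with $\operatorname{Ran}(TF-TG)\subset\operatorname{Ran}(F-G)$ for all $F,G\in C(X,E)$ and $T(1\otimes 0_E)=1\otimes 0_E$. Then for each $u\in E\setminus\{0_E\}$ there exists a continuous map $\varphi_u:Y\to X$ such that $\tilde T_u f=f\circ\varphi_u$ for all $f\in C(X)$; in particular $\tilde T_u$ is linear.
   Context: $C(X,E)$ is the vector space of continuous functions $X\to E$; $\operatorname{Ran}(F)=\{F(x):x\in X\}$; $f\otimes u$ denotes $x\mapsto f(x)u$, and $1\otimes 0_E$ is the constant function $0_E$. For $u\in E\setminus\{0_E\}$ and $f\in C(X)$, $\tilde T_u f\in C(Y)$ is the unique function $Y\to\mathbb{C}$ with $T(f\otimes u)(y)=(\tilde T_uf)(y)u$ for all $y\in Y$. *)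

From Stdlib Require Import Reals List.
Open Scope R_scope.

Record Cplx := mkC { Cre : R; Cim : R }.
Definition Cadd (z w : Cplx) : Cplx := mkC (Cre z + Cre w) (Cim z + Cim w).
Definition Copp (z : Cplx) : Cplx := mkC (- Cre z) (- Cim z).
Definition Cmul (z w : Cplx) : Cplx :=
  mkC (Cre z * Cre w - Cim z * Cim w) (Cre z * Cim w + Cim z * Cre w).
Definition C0 : Cplx := mkC 0 0.
Definition C1 : Cplx := mkC 1 0.
Definition Cnorm (z : Cplx) : R := sqrt (Cre z * Cre z + Cim z * Cim z).

Definition C_open (S : Cplx -> Prop) : Prop :=
  forall z, S z -> exists eps, 0 < eps /\
    forall w, Cnorm (Cadd w (Copp z)) < eps -> S w.

Record TopSpace := {
  pt :> Type;
  is_open : (pt -> Prop) -> Prop;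
  open_full : is_open (fun _ => True);
  open_inter : forall U V, is_open U -> is_open V ->
                 is_open (fun x => U x /\ V x);
  open_union : forall (I : Type) (U : I -> pt -> Prop),
                 (forall i, is_open (U i)) -> is_open (fun x => exists i, U i x)
}.

Definition compact_space (X : TopSpace) : Prop :=
  forall (I : Type) (U : I -> X -> Prop),
    (forall i, is_open X (U i)) -> (forall x, exists i, U i x) ->
    exists l : list I, forall x, exists i, In i l /\ U i x.

Definition hausdorff_space (X : TopSpace) : Prop :=
  forall x y : X, x <> y -> exists U V : X -> Prop,
    is_open X U /\ is_open X V /\ U x /\ V y /\ (forall z, ~ (U z /\ V z)).

Definition continuous_wrt {A B : Type} (openA : (A -> Prop) -> Prop)
  (openB : (B -> Prop) -> Prop) (f : A -> B) : Prop :=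
  forall V, openB V -> openA (fun x => V (f x)).

Record LCS := {
  vec :> Type;
  v0 : vec;
  vadd : vec -> vec -> vec;
  vopp : vec -> vec;
  vscale : Cplx -> vec -> vec;
  vaddA : forall x y z, vadd x (vadd y z) = vadd (vadd x y) z;
  vaddC : forall x y, vadd x y = vadd y x;
  vadd0 : forall x, vadd x v0 = x;
  vaddN : forall x, vadd x (vopp x) = v0;
  vscaleA : forall a b x, vscale a (vscale b x) = vscale (Cmul a b) x;
  vscale1 : forall x, vscale C1 x = x;
  vscaleDr : forall a x y, vscale a (vadd x y) = vadd (vscale a x) (vscale a y);
  vscaleDl : forall a b x, vscale (Cadd a b) x = vadd (vscale a x) (vscale b x);
  sn_index : Type;
  sn : sn_index -> vec -> R;
  sn_triangle : forall i x y, sn i (vadd x y) <= sn i x + sn i y;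
  sn_homog : forall i a x, sn i (vscale a x) = Cnorm a * sn i x;
  sn_separating : forall x, (forall i, sn i x = 0) -> x = v0
}.

Definition vsub (E : LCS) (x y : E) : E := vadd E x (vopp E y).

Definition E_open (E : LCS) (S : E -> Prop) : Prop :=
  forall x, S x -> exists (l : list (sn_index E)) (eps : R), 0 < eps /\
    forall y, (forall i, In i l -> sn E i (vsub E y x) < eps) -> S y.

Definition contE (X : TopSpace) (E : LCS) (F : X -> E) : Prop :=
  continuous_wrt (is_open X) (E_open E) F.
Definition CXE (X : TopSpace) (E : LCS) := { F : X -> E | contE X E F }.
Definition contC (X : TopSpace) (f : X -> Cplx) : Prop :=
  continuous_wrt (is_open X) C_open f.
Definition contXY (X Y : TopSpace) (phi : Y -> X) : Prop :=
  continuous_wrt (is_open Y) (is_open X) phi.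

(* Fix y and write s(f) for the scalar with T(f ⊗ u)(y) = s(f) u.  The
   hypotheses on T say exactly that s(f) ∈ Ran f and s(f) - s(g) ∈ Ran (f - g).
   Evaluating s at h + ik shows that on real functions s is additive and that
   s(h) = 0 forces s(k) = 0 whenever k vanishes on the zero set of h.  If no
   point x satisfied h(x) = s(h) for every real h, compactness would give
   h_1, ..., h_n with no common such point; then H = Σ |h_i - s(h_i)| is a
   function with s(H) = 0 and no zero, contradicting s(H) ∈ Ran H.  That point
   is φ_u(y).  Continuity of φ_u comes from Urysohn's lemma: for r vanishing
   off V with r(φ_u(y0)) = 1, the continuous function T(r ⊗ u) is nonzero
   exactly where r ∘ φ_u is. *)

From Stdlib Require Import Reals Lra List Classical ClassicalEpsilon.
From Stdlib Require Import FunctionalExtensionality PropExtensionality ProofIrrelevance.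
From HB Require Import structures.
From mathcomp Require Import all_boot all_algebra all_classical all_reals all_analysis.
From mathcomp Require Import Rstruct Rstruct_topology finmap.
Import numFieldNormedType.Exports.

Open Scope R_scope.

Lemma open_ext (X : TopSpace) (U V : X -> Prop) :
  (forall x, U x <-> V x) -> is_open X U -> is_open X V.
Proof.
move=> UV; have -> // : U = V.
by apply: functional_extensionality => x; apply: propositional_extensionality.
Qed.

Lemma open_empty (X : TopSpace) : is_open X (fun _ => False).
Proof.
apply: open_ext (open_union X False (fun i _ => True) (fun i => match i with end)).
by move=> x; split=> [[[]]|[]].
Qed.

Lemma open_nbhd (X : TopSpace) (U : X -> Prop) :
  (forall x, U x -> exists V, is_open X V /\ V x /\ forall z, V z -> U z) ->
  is_open X U.
Proof.
move=> nbhsU.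
pose I := {V : X -> Prop | is_open X V /\ forall z, V z -> U z}.
apply: open_ext (open_union X I (fun i => sval i) (fun i => proj1 (svalP i))).
move=> x; split=> [[[V [_ VU]] /= /VU //]|Ux].
by have [V [oV [Vx VU]]] := nbhsU x Ux; exists (exist _ V (conj oV VU)).
Qed.

Lemma nbhs_forall_in {X : TopSpace} {I : Type} (P : I -> X -> Prop) (x : X)
    (l : list I) :
  (forall i, In i l -> exists U, is_open X U /\ U x /\ forall z, U z -> P i z) ->
  exists U, is_open X U /\ U x /\ forall z, U z -> forall i, In i l -> P i z.
Proof.
elim: l => [_|i l IH nbhsP].
  by exists (fun _ => True); split; [exact: open_full | split].
have [Ui [oUi [Uix UiP]]] := nbhsP i (or_introl erefl).
have [Ul [oUl [Ulx UlP]]] := IH (fun j lj => nbhsP j (or_intror lj)).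
exists (fun z => Ui z /\ Ul z); split; first exact: open_inter.
by split=> // z [/UiP Piz /UlP Plz] j [<-|/Plz].
Qed.

Definition contR (X : TopSpace) (h : X -> R) : Prop :=
  forall x eps, 0 < eps ->
    exists U, is_open X U /\ U x /\ forall z, U z -> Rabs (h z - h x) < eps.

Section RealContinuity.
Context {X : TopSpace}.

Lemma contR_const (c : R) : contR X (fun _ => c).
Proof.
move=> x eps eps0; exists (fun _ => True); split; first exact: open_full.
by split=> // z _; rewrite Rminus_diag Rabs_R0.
Qed.

Lemma contR_plus {h k : X -> R} :
  contR X h -> contR X k -> contR X (fun x => h x + k x).
Proof.
move=> ch ck x eps eps0.
have [U [oU [Ux Uh]]] := ch x (eps / 2) ltac:(lra).
have [V [oV [Vx Vk]]] := ck x (eps / 2) ltac:(lra).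
exists (fun z => U z /\ V z); split; first exact: open_inter.
split=> // z [/Uh hz /Vk kz].
have -> : h z + k z - (h x + k x) = h z - h x + (k z - k x) by ring.
by have := Rabs_triang (h z - h x) (k z - k x); lra.
Qed.

Lemma contR_abs {h : X -> R} : contR X h -> contR X (fun x => Rabs (h x)).
Proof.
move=> ch x eps eps0; have [U [oU [Ux Uh]]] := ch x eps eps0.
exists U; split=> //; split=> // z /Uh hz.
by have := Rabs_triang_inv2 (h z) (h x); lra.
Qed.

Lemma open_neq (h : X -> R) (a : R) : contR X h -> is_open X (fun x => h x <> a).
Proof.
move=> ch; apply: open_nbhd => x hxa.
have [U [oU [Ux Uh]]] := ch x _ (Rabs_pos_lt (h x - a) ltac:(lra)).
exists U; split=> //; split=> // z /Uh + hza; rewrite hza.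
by rewrite Rabs_minus_sym; lra.
Qed.

End RealContinuity.

(** * Urysohn's lemma, transferred from MathComp-Analysis *)

Local Open Scope classical_set_scope.

Lemma mem_In (T : eqType) (s : seq T) (x : T) : x \in s <-> In x s.
Proof.
elim: s => [|y s IH] //=; rewrite in_cons -IH.
by split=> [/orP[/eqP ->|]|[->|->]]; rewrite ?eqxx ?orbT; auto.
Qed.

(* The carrier of [X] as a MathComp topological space; the point [x0] is only
   needed because MathComp's finite-cover characterisation of compactness is
   stated for pointed spaces. *)
Definition pointed_top (X : TopSpace) (x0 : X) : Type := pt X.

Section UrysohnTransfer.
Context {X : TopSpace} {x0 : X}.
Local Notation T := (pointed_top X x0).

HB.instance Definition _ := gen_eqMixin T.
HB.instance Definition _ := gen_choiceMixin T.
HB.instance Definition _ := isPointed.Build T x0.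

Let open_setI : setI_closed (is_open X : set_system T).
Proof. by move=> A B oA oB; apply: open_inter. Qed.

Let open_bigcup (I : Type) (f : I -> set T) :
  (forall i, is_open X (f i)) -> is_open X (\bigcup_i f i).
Proof.
move=> fo; apply: open_ext (open_union X I f fo) => x.
by split=> [ [i fx] | [i _ fx] ]; exists i.
Qed.

HB.instance Definition _ :=
  isOpenTopological.Build T (open_full X) open_setI open_bigcup.

Lemma compact_pointed_top : compact_space X -> compact [set: T].
Proof.
move=> cX; rewrite compact_cover => I D f fo Dcov.
have subcov : forall x : T, exists i : {i | D i}, f (sval i) x.
  by move=> x; have [i Di fx] := Dcov x Logic.I; exists (exist _ i Di).
have [l lcov] := cX _ _ (fun i => fo _ (svalP i)) subcov.
exists (seq_fset tt (map sval l)).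
- move=> i; rewrite seq_fsetE mem_In => /List.in_map_iff[j [<- _]].
  by apply/mem_set; case: j.
- move=> x _; have [j [lj fjx]] := lcov x; exists (sval j); last exact: fjx.
  by rewrite /mkset seq_fsetE mem_In; apply: List.in_map.
Qed.

Lemma hausdorff_pointed_top :
  hausdorff_space X -> separation_axioms.hausdorff_space T.
Proof.
move=> hX; rewrite open_hausdorff => x y /eqP xy.
have [U [V [oU [oV [Ux [Vy UV]]]]]] := hX x y xy.
exists (U, V); first by split; apply/mem_set.
by split=> //; apply/eqP; rewrite -subset0 => z [Uz Vz]; apply: (UV z).
Qed.

Lemma contR_continuous (f : T -> R) : continuous f -> contR X f.
Proof.
move=> cf x e /RltP e0.
have [U [oU Ux Ue]] := @cvgr_dist_lt _ R^o _ _ _ f (f x) (cf x) e e0.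
exists U; split; [exact: oU | split; [exact: Ux | move=> z /Ue /RltP]].
by rewrite Rabs_minus_sym.
Qed.

Lemma urysohn_point {V : X -> Prop} : compact_space X -> hausdorff_space X ->
  is_open X V -> V x0 ->
  exists r : X -> R, contR X r /\ r x0 = 1 /\ forall x, ~ V x -> r x = 0.
Proof.
move=> cX hX oV Vx0; have hT := hausdorff_pointed_top hX.
have nT := compact_normal hT (compact_pointed_top cX).
have clV : closed (~` (V : set T)) by apply: open_closedC.
have clx0 : closed [set x0 : T].
  exact: accessible_closed_set1 (hausdorff_accessible hT) x0.
have disj : ~` (V : set T) `&` [set x0] = set0.
  by rewrite -subset0 => x [nVx x0x]; apply: nVx; rewrite x0x.
have [f [cf _ f0 f1]] := (@uniform_separatorP T R _ _).1
  ((@normal_separatorP R T).1 nT _ _ clV clx0 disj).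
exists f; split; [exact: contR_continuous | split].
- by apply: f1; exists x0.
- by move=> x nVx; apply: f0; exists x.
Qed.

End UrysohnTransfer.

Local Close Scope classical_set_scope.

Definition Csub (z w : Cplx) : Cplx := Cadd z (Copp w).

Lemma Ceq (z w : Cplx) : Cre z = Cre w -> Cim z = Cim w -> z = w.
Proof. by case: z; case: w => ? ? ? ? /= -> ->. Qed.

Lemma Cnorm_ge_re (z : Cplx) : Rabs (Cre z) <= Cnorm z.
Proof.
rewrite /Cnorm -sqrt_Rsqr_abs; apply: sqrt_le_1_alt.
by rewrite /Rsqr; nra.
Qed.

Lemma Cnorm_ge_im (z : Cplx) : Rabs (Cim z) <= Cnorm z.
Proof.
rewrite /Cnorm -sqrt_Rsqr_abs; apply: sqrt_le_1_alt.
by rewrite /Rsqr; nra.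
Qed.

Lemma Cnorm_le_re_im (z : Cplx) : Cnorm z <= Rabs (Cre z) + Rabs (Cim z).
Proof.
have re0 := Rabs_pos (Cre z); have im0 := Rabs_pos (Cim z).
rewrite /Cnorm -[X in _ <= X]sqrt_Rsqr; last lra.
apply: sqrt_le_1_alt.
by have := Rsqr_abs (Cre z); have := Rsqr_abs (Cim z); rewrite /Rsqr; nra.
Qed.

Lemma Cnorm_ge0 (z : Cplx) : 0 <= Cnorm z.
Proof. exact: sqrt_pos. Qed.

Lemma Cnorm_C0 : Cnorm C0 = 0.
Proof. by rewrite /Cnorm /= Rmult_0_l Rplus_0_l sqrt_0. Qed.

Lemma Cnorm_m1 : Cnorm (mkC (-1) 0) = 1.
Proof.
rewrite /Cnorm /=; have -> : -1 * -1 + 0 * 0 = 1 by ring.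
exact: sqrt_1.
Qed.

Lemma Cnorm_eq0 (z : Cplx) : Cnorm z = 0 -> z = C0.
Proof.
case: z => a b /sqrt_eq_0 /= ab0.
have ab : a * a + b * b = 0 by apply: ab0; nra.
by apply: Ceq => /=; nra.
Qed.

Definition mkCf {X : Type} (h k : X -> R) : X -> Cplx := fun x => mkC (h x) (k x).

Lemma mkCf_eta {X : Type} (f : X -> Cplx) :
  mkCf (fun x => Cre (f x)) (fun x => Cim (f x)) = f.
Proof. by apply: functional_extensionality => x; rewrite /mkCf; case: (f x). Qed.

Definition contReIm (X : TopSpace) (f : X -> Cplx) : Prop :=
  contR X (fun x => Cre (f x)) /\ contR X (fun x => Cim (f x)).

Lemma contReIm_mkCf {X : TopSpace} {h k : X -> R} :
  contR X h -> contR X k -> contReIm X (mkCf h k).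
Proof. by split. Qed.

Section LocallyConvex.
Context {E : LCS}.

Lemma vadd0l (x : E) : vadd E (v0 E) x = x.
Proof. by rewrite vaddC vadd0. Qed.

Lemma vadd_idem (z : E) : vadd E z z = z -> z = v0 E.
Proof. by move=> zz; rewrite -(vaddN E z) -{2}zz -vaddA vaddN vadd0. Qed.

Lemma vscale_C0 (x : E) : vscale E C0 x = v0 E.
Proof.
apply: vadd_idem; rewrite -vscaleDl; congr (vscale E _ x).
by apply: Ceq => /=; ring.
Qed.

Lemma vopp_scale (x : E) : vopp E x = vscale E (mkC (-1) 0) x.
Proof.
have inv : vadd E x (vscale E (mkC (-1) 0) x) = v0 E.
  rewrite -{1}(vscale1 E x) -vscaleDl -(vscale_C0 x); congr (vscale E _ x).
  by apply: Ceq => /=; ring.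
by rewrite -[LHS]vadd0 -inv vaddA (vaddC E (vopp E x)) vaddN vadd0l.
Qed.

Lemma vscale_v0 (a : Cplx) : vscale E a (v0 E) = v0 E.
Proof. by apply: vadd_idem; rewrite -vscaleDr vadd0. Qed.

Lemma vsub_v0 (x : E) : vsub E x (v0 E) = x.
Proof. by rewrite /vsub vopp_scale vscale_v0 vadd0. Qed.

Lemma vsub_scale (a b : Cplx) (x : E) :
  vsub E (vscale E a x) (vscale E b x) = vscale E (Csub a b) x.
Proof.
rewrite /vsub vopp_scale vscaleA -vscaleDl; congr (vscale E _ x).
by apply: Ceq => /=; ring.
Qed.

Lemma vsub_split (x y z : E) :
  vsub E x z = vadd E (vsub E x y) (vsub E y z).
Proof.
rewrite /vsub -vaddA; congr (vadd E x _).
by rewrite vaddA (vaddC E (vopp E y)) vaddN vadd0l.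
Qed.

Lemma sn_v0 (i : sn_index E) : sn E i (v0 E) = 0.
Proof. by rewrite -(vscale_C0 (v0 E)) sn_homog Cnorm_C0 Rmult_0_l. Qed.

Lemma sn_opp (i : sn_index E) (x : E) : sn E i (vopp E x) = sn E i x.
Proof. by rewrite vopp_scale sn_homog Cnorm_m1 Rmult_1_l. Qed.

Lemma sn_ge0 (i : sn_index E) (x : E) : 0 <= sn E i x.
Proof.
have := sn_triangle E i x (vopp E x).
by rewrite vaddN sn_v0 sn_opp; lra.
Qed.

Lemma sn_pos {x : E} : x <> v0 E -> exists i, 0 < sn E i x.
Proof.
move=> x0; apply: NNPP => nopos; apply: x0; apply: sn_separating => i.
have : ~ 0 < sn E i x by move=> ?; apply: nopos; exists i.
by have := sn_ge0 i x; lra.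
Qed.

Lemma vscale_inj {a b : Cplx} {x : E} :
  x <> v0 E -> vscale E a x = vscale E b x -> a = b.
Proof.
move=> /sn_pos [i xi] ab.
have := sn_homog E i (Csub a b) x.
rewrite -vsub_scale ab /vsub vaddN sn_v0.
move=> /esym /Rmult_integral [/Cnorm_eq0 ab0 | xi0]; last lra.
by move: (f_equal Cre ab0) (f_equal Cim ab0) => /= re im; apply: Ceq; lra.
Qed.

Lemma open_ball (i : sn_index E) (c : E) (r : R) :
  E_open E (fun v => sn E i (vsub E v c) < r).
Proof.
move=> x xr; exists (i :: nil), (r - sn E i (vsub E x c)); split; first lra.
move=> y /(_ i (or_introl erefl)) yx.
by have := sn_triangle E i (vsub E y x) (vsub E x c); rewrite -vsub_split; lra.
Qed.

Lemma open_nonzero : E_open E (fun v => v <> v0 E).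
Proof.
move=> x /sn_pos [i xi]; exists (i :: nil), (sn E i x); split=> // y.
by move=> /(_ i (or_introl erefl)) + y0; rewrite y0 /vsub vadd0l sn_opp; lra.
Qed.

End LocallyConvex.

Lemma contE_const (X : TopSpace) (E : LCS) (c : E) : contE X E (fun _ => c).
Proof.
move=> W _; case: (pselect (W c)) => Wc.
- by apply: open_ext (open_full X).
- by apply: open_ext (open_empty X).
Qed.

(** * Scalar functionals with the range property *)

Section RangeFunctional.
Context {X : TopSpace} {sigma : (X -> Cplx) -> Cplx}.
Hypothesis sigma_point :
  forall f, contReIm X f -> exists x, sigma f = f x.
Hypothesis sigma_range : forall f g, contReIm X f -> contReIm X g ->
  exists x, Csub (sigma f) (sigma g) = Csub (f x) (g x).

Definition sigmaR (h : X -> R) : R := Cre (sigma (mkCf h (fun _ => 0))).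

Let cR0 : contR X (fun _ => 0) := contR_const 0.

Lemma sigma_real {h : X -> R} :
  contR X h -> sigma (mkCf h (fun _ => 0)) = mkC (sigmaR h) 0.
Proof.
move=> ch; have [x ex] := sigma_point _ (contReIm_mkCf ch cR0).
by apply: Ceq => //=; rewrite ex.
Qed.

Lemma sigma_imag {k : X -> R} :
  contR X k -> sigma (mkCf (fun _ => 0) k) = mkC 0 (sigmaR k).
Proof.
move=> ck.
have [x /(f_equal Cre) /= ex] := sigma_point _ (contReIm_mkCf cR0 ck).
have [x' ex'] := sigma_range _ _ (contReIm_mkCf cR0 ck) (contReIm_mkCf ck cR0).
move: ex'; rewrite sigma_real // => ex'.
move: (f_equal Cre ex') (f_equal Cim ex') => /= e1 e2.
by apply: Ceq => /=; lra.
Qed.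

Lemma sigma_mkCf {h k : X -> R} :
  contR X h -> contR X k -> sigma (mkCf h k) = mkC (sigmaR h) (sigmaR k).
Proof.
move=> ch ck; have chk := contReIm_mkCf ch ck.
have [x /(f_equal Cre) /= ex] := sigma_range _ _ chk (contReIm_mkCf ch cR0).
have [x' /(f_equal Cim) /= ex'] := sigma_range _ _ chk (contReIm_mkCf cR0 ck).
move: ex ex'; rewrite sigma_real // sigma_imag //= => ex ex'.
by apply: Ceq => /=; lra.
Qed.

Lemma sigmaR_point {h : X -> R} : contR X h -> exists x, sigmaR h = h x.
Proof.
move=> ch; have [x ex] := sigma_point _ (contReIm_mkCf ch cR0).
by exists x; rewrite /sigmaR ex.
Qed.

Lemma sigmaR_sub_const {h : X -> R} (a : R) :
  contR X h -> sigmaR (fun x => h x - a) = sigmaR h - a.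
Proof.
move=> ch; have cha : contR X (fun x => h x - a).
  exact: contR_plus ch (contR_const _).
have [x /(f_equal Cre) /= ex] :=
  sigma_range _ _ (contReIm_mkCf cha cR0) (contReIm_mkCf ch cR0).
by rewrite /sigmaR; lra.
Qed.

Lemma sigmaR_add {h k : X -> R} : contR X h -> contR X k ->
  sigmaR (fun x => h x + k x) = sigmaR h + sigmaR k.
Proof.
move=> ch ck; have chk := contR_plus ch ck.
have [x ex] := sigma_range _ _ (contReIm_mkCf chk cR0) (contReIm_mkCf ch ck).
move: ex; rewrite sigma_real // sigma_mkCf // => ex.
by move: (f_equal Cre ex) (f_equal Cim ex) => /= e1 e2; lra.
Qed.

(* Evaluate sigma at h + ik: it is a value h(x) + i k(x), and h(x) = 0. *)
Lemma sigmaR_zero_transfer {h k : X -> R} : contR X h -> contR X k ->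
  sigmaR h = 0 -> (forall x, h x = 0 -> k x = 0) -> sigmaR k = 0.
Proof.
move=> ch ck h0 hk; have [x] := sigma_point _ (contReIm_mkCf ch ck).
rewrite sigma_mkCf // => ex.
move: (f_equal Cre ex) (f_equal Cim ex) => /= hx ->.
by apply: hk; rewrite -hx.
Qed.

Lemma sigmaR_dist {h : X -> R} :
  contR X h -> sigmaR (fun x => Rabs (h x - sigmaR h)) = 0.
Proof.
move=> ch; have chs : contR X (fun x => h x - sigmaR h).
  exact: contR_plus ch (contR_const _).
apply: (sigmaR_zero_transfer chs (contR_abs chs)).
  by rewrite sigmaR_sub_const //; ring.
by move=> x ->; exact: Rabs_R0.
Qed.

Lemma sigmaR_gauge (l : list {h : X -> R | contR X h}) :
  exists H, contR X H /\ (forall x, 0 <= H x) /\ sigmaR H = 0 /\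
    forall x, H x = 0 -> forall i, In i l -> sval i x = sigmaR (sval i).
Proof.
elim: l => [|[h ch] l [H [cH [H0 [sH Hl]]]]].
  exists (fun _ => 0); split=> //; split=> [x|]; first lra.
  by have [x ->] := sigmaR_point cR0.
pose g x := Rabs (h x - sigmaR h).
have cg : contR X g by apply/contR_abs/contR_plus/contR_const.
have g0 x : 0 <= g x by apply: Rabs_pos.
exists (fun x => H x + g x); split; first exact: contR_plus.
split=> [x|]; first by have := H0 x; have := g0 x; lra.
split; first by rewrite sigmaR_add // sH sigmaR_dist //; ring.
move=> x /= /(Rplus_eq_R0 _ _ (H0 x) (g0 x)) [Hx gx] i.
case=> [<-|li] /=; last exact: Hl.
by move: gx; rewrite /g; split_Rabs; lra.
Qed.

Lemma sigmaR_eval :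
  compact_space X -> exists x, forall h, contR X h -> h x = sigmaR h.
Proof.
move=> cX; apply: NNPP => nopoint.
pose U (i : {h : X -> R | contR X h}) x := sval i x <> sigmaR (sval i).
have [l lcov] : exists l, forall x, exists i, In i l /\ U i x.
  apply: cX => [[h ch]|x]; first exact: open_neq.
  apply: NNPP => nUx; apply: nopoint; exists x => h ch.
  by apply: NNPP => hx; apply: nUx; exists (exist _ h ch).
have [H [cH [_ [sH Hl]]]] := sigmaR_gauge l.
have [x Hx] := sigmaR_point cH.
have [i [li Uix]] := lcov x.
by apply: Uix; apply: Hl li; rewrite -Hx.
Qed.

Lemma sigma_eval :
  compact_space X -> exists x, forall f, contReIm X f -> sigma f = f x.
Proof.
move=> cX; have [x hx] := sigmaR_eval cX; exists x => f [cre cim].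
by rewrite -(mkCf_eta f) sigma_mkCf // -!hx.
Qed.

End RangeFunctional.

Definition tensor {X : Type} {E : LCS} (f : X -> Cplx) (u : E) : X -> E :=
  fun x => vscale E (f x) u.

Section Tensor.
Context {X : TopSpace} {E : LCS}.
Variable u : E.

Lemma sn_tensor_sub (f : X -> Cplx) i x z :
  sn E i (vsub E (tensor f u z) (tensor f u x)) = Cnorm (Csub (f z) (f x)) * sn E i u.
Proof. by rewrite /tensor vsub_scale sn_homog. Qed.

Lemma contReIm_sn_near {f : X -> Cplx} i x eps : contReIm X f -> 0 < eps ->
  exists U, is_open X U /\ U x /\
    forall z, U z -> sn E i (vsub E (tensor f u z) (tensor f u x)) < eps.
Proof.
move=> [cre cim] eps0; have su := sn_ge0 i u.
pose d := eps / (2 * (sn E i u + 1)).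
have d0 : 0 < d by apply: Rdiv_lt_0_compat; lra.
have dsu : 2 * d * (sn E i u + 1) = eps by rewrite /d; field; lra.
have [U1 [oU1 [U1x U1re]]] := cre x d d0.
have [U2 [oU2 [U2x U2im]]] := cim x d d0.
exists (fun z => U1 z /\ U2 z); split; first exact: open_inter.
split=> // z [/U1re zre /U2im zim]; rewrite sn_tensor_sub.
have := Cnorm_le_re_im (Csub (f z) (f x)); rewrite /= -!/(Rminus _ _) => cn.
have := Cnorm_ge0 (Csub (f z) (f x)); nra.
Qed.

Lemma contReIm_contE_tensor {f : X -> Cplx} :
  contReIm X f -> contE X E (tensor f u).
Proof.
move=> cf W oW; apply: open_nbhd => x Wfx.
have [l [eps [eps0 ballW]]] := oW _ Wfx.
have [U [oU [Ux Ul]]] :=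
  nbhs_forall_in _ x l (fun i _ => contReIm_sn_near i x _ cf eps0).
by exists U; split=> //; split=> // z /Ul; apply: ballW.
Qed.

Hypothesis hu : u <> v0 E.

Lemma contE_tensor_contReIm {f : X -> Cplx} :
  contE X E (tensor f u) -> contReIm X f.
Proof.
move=> cf; have [i ui] := sn_pos hu.
have near x eps : 0 < eps -> exists U, is_open X U /\ U x /\
    forall z, U z -> Cnorm (Csub (f z) (f x)) < eps.
  move=> eps0.
  exists (fun z => sn E i (vsub E (tensor f u z) (tensor f u x)) < eps * sn E i u).
  split; first exact: cf _ (open_ball _ _ _).
  split; first by rewrite /vsub vaddN sn_v0; nra.
  by move=> z; rewrite sn_tensor_sub => /Rmult_lt_reg_r; apply.
split=> x eps /(near x) [U [oU [Ux Uf]]]; exists U; split=> //; split=> // z /Uf.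
- by have := Cnorm_ge_re (Csub (f z) (f x)); rewrite /= -/(Rminus _ _); lra.
- by have := Cnorm_ge_im (Csub (f z) (f x)); rewrite /= -/(Rminus _ _); lra.
Qed.

End Tensor.

(** * The representing map φ_u *)

Section Representation.
Context {X Y : TopSpace} {E : LCS}.
Variable T : CXE X E -> CXE Y E.
Hypothesis hran : forall (F G : CXE X E) (y : Y), exists x : X,
  vsub E (proj1_sig (T F) y) (proj1_sig (T G) y)
  = vsub E (proj1_sig F x) (proj1_sig G x).
Hypothesis hzero : forall h : contE X E (fun _ => v0 E),
  proj1_sig (T (exist _ (fun _ => v0 E) h)) = (fun _ => v0 E).
Variable u : E.
Hypothesis hu : u <> v0 E.

Lemma T_range (F : CXE X E) (y : Y) : exists x, proj1_sig (T F) y = proj1_sig F x.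
Proof.
have [x ex] := hran F (exist _ (fun _ => v0 E) (contE_const X E (v0 E))) y.
by exists x; move: ex; rewrite hzero /= !vsub_v0.
Qed.

Definition Ttilde (y : Y) (f : X -> Cplx) : Cplx :=
  epsilon (inhabits C0) (fun c => exists hf : contE X E (tensor f u),
    proj1_sig (T (exist _ (tensor f u) hf)) y = vscale E c u).

Lemma Ttilde_spec (y : Y) (f : X -> Cplx) (hf : contE X E (tensor f u)) :
  proj1_sig (T (exist _ (tensor f u) hf)) y = vscale E (Ttilde y f) u.
Proof.
have [|hf' e] := epsilon_spec (inhabits C0) (fun c => exists hf,
    proj1_sig (T (exist _ (tensor f u) hf)) y = vscale E c u).
  by have [x e] := T_range (exist _ (tensor f u) hf) y; exists (f x), hf.
by rewrite (proof_irrelevance _ hf hf') e.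
Qed.

Lemma Ttilde_point (y : Y) (f : X -> Cplx) :
  contReIm X f -> exists x, Ttilde y f = f x.
Proof.
move/(contReIm_contE_tensor u) => hf.
have [x] := T_range (exist _ (tensor f u) hf) y.
by rewrite Ttilde_spec => /(vscale_inj hu) ex; exists x.
Qed.

Lemma Ttilde_range (y : Y) (f g : X -> Cplx) : contReIm X f -> contReIm X g ->
  exists x, Csub (Ttilde y f) (Ttilde y g) = Csub (f x) (g x).
Proof.
move=> /(contReIm_contE_tensor u) hf /(contReIm_contE_tensor u) hg.
have [x] := hran (exist _ (tensor f u) hf) (exist _ (tensor g u) hg) y.
by rewrite !Ttilde_spec /= /tensor !vsub_scale => /(vscale_inj hu) ex; exists x.
Qed.

Hypothesis hXne : inhabited X.
Hypothesis hXc : compact_space X.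

Definition phi (y : Y) : X :=
  epsilon hXne (fun x => forall f, contReIm X f -> Ttilde y f = f x).

Lemma Ttilde_phi (y : Y) (f : X -> Cplx) : contReIm X f -> Ttilde y f = f (phi y).
Proof.
apply: (epsilon_spec hXne (fun x => forall f, contReIm X f -> Ttilde y f = f x)).
exact: sigma_eval (Ttilde_point y) (Ttilde_range y) hXc.
Qed.

Lemma T_tensor (f : X -> Cplx) (hf : contE X E (tensor f u)) (y : Y) :
  proj1_sig (T (exist _ (tensor f u) hf)) y = vscale E (f (phi y)) u.
Proof. by rewrite Ttilde_spec Ttilde_phi //; exact: (contE_tensor_contReIm u hu hf). Qed.

Hypothesis hXh : hausdorff_space X.

Lemma phi_continuous : contXY X Y phi.
Proof.
move=> V oV; apply: open_nbhd => y0 Vy0.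
have [r [cr [r1 r0]]] := urysohn_point hXc hXh oV Vy0.
have hr := contReIm_contE_tensor u (contReIm_mkCf cr (contR_const 0)).
pose G := T (exist _ (tensor (mkCf r (fun _ => 0)) u) hr).
exists (fun y => proj1_sig G y <> v0 E); split.
  exact: (proj2_sig G) open_nonzero.
split; first by rewrite /G T_tensor /mkCf r1 vscale1.
move=> y; rewrite /G T_tensor /mkCf => Gy; apply: NNPP => nV; apply: Gy.
by rewrite r0 //; exact: vscale_C0.
Qed.

End Representation.

Theorem lemma4p3 (X Y : TopSpace) (E : LCS)
  (hXne : inhabited (pt X)) (hYne : inhabited (pt Y))
  (hXc : compact_space X) (hYc : compact_space Y)
  (hXh : hausdorff_space X) (hYh : hausdorff_space Y)
  (hE : exists e : vec E, e <> v0 E)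
  (T : CXE X E -> CXE Y E)
  (hran : forall (F G : CXE X E) (y : Y), exists x : X,
      vsub E (proj1_sig (T F) y) (proj1_sig (T G) y)
      = vsub E (proj1_sig F x) (proj1_sig G x))
  (hzero : forall h : contE X E (fun _ => v0 E),
      proj1_sig (T (exist _ (fun _ => v0 E) h)) = (fun _ => v0 E)) :
  forall u : vec E, u <> v0 E ->
    exists phi : Y -> X, contXY X Y phi /\
      forall (f : X -> Cplx), contC X f ->
        forall (hfu : contE X E (fun x => vscale E (f x) u)) (y : Y),
          proj1_sig (T (exist _ (fun x => vscale E (f x) u) hfu)) y
          = vscale E (f (phi y)) u.
Proof.
move=> u hu; exists (phi T u hXne); split.
  exact: (phi_continuous T hran hzero u hu hXne hXc hXh).
(* The continuity of f is recovered from that of f ⊗ u. *)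
move=> f _ hfu y; exact: (T_tensor T hran hzero u hu hXne hXc f hfu y).
Qed.
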